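(* There exists an absolute constant $\delta>0$ such that for every $t\in[0,1]$ and every integer $m\ge0$ the following hold. (i) For every $z\in\mathbb C$ with $|\operatorname{Im}z|\le\delta$ there is $k_0\in\{0,\dots,m\}$ with $|\Phi_{k_0}(z)|\ge3^{-m}$. (ii) For every $x_0\in\mathbb R$, with $R=[x_0-\delta,x_0+\delta]\times[-\delta,\delta]\subset\mathbb C$, there is at most one index $k_0\in\{0,\dots,m\}$ which is critical for $R$, where $k_0$ is called critical for $R$ if there is $z_0\in R$ with $|\tilde\varphi_{k_0}(z_0)|<3^{-m}$.
   Context: For fixed $t\in[0,1]$: $\tilde\varphi(z)=1+e^{-iz}+e^{-itz}$, $\tilde\varphi_k(z)=\tilde\varphi(3^{-k}z)$ for integers $k\ge0$, $\Phi(z)=\prod_{k=0}^m\tilde\varphi_k(z)$, and $\Phi_{k_0}(z)=\prod_{k\in\{0,\dots,m\}\setminus\{k_0\}}\tilde\varphi_k(z)$. *)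

From Stdlib Require Import Reals List Arith.
Open Scope R_scope.

Definition Cpx : Type := (R * R)%type.
Definition Re (z : Cpx) : R := fst z.
Definition Im (z : Cpx) : R := snd z.
Definition C1 : Cpx := (1, 0).
Definition Cadd (a b : Cpx) : Cpx := (fst a + fst b, snd a + snd b).
Definition Cmul (a b : Cpx) : Cpx :=
  (fst a * fst b - snd a * snd b, fst a * snd b + snd a * fst b).
Definition Cscale (r : R) (z : Cpx) : Cpx := (r * fst z, r * snd z).
Definition Cnorm (z : Cpx) : R := sqrt (fst z * fst z + snd z * snd z).
Definition Cexp (z : Cpx) : Cpx := (exp (fst z) * cos (snd z), exp (fst z) * sin (snd z)).
(* -i * z  for z = x + i y  equals  y - i x *)
Definition Cmul_negI (z : Cpx) : Cpx := (snd z, - fst z).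

(* phi~(z) = 1 + e^{-iz} + e^{-itz} *)
Definition phit (t : R) (z : Cpx) : Cpx :=
  Cadd C1 (Cadd (Cexp (Cmul_negI z)) (Cexp (Cmul_negI (Cscale t z)))).

Definition phik (t : R) (k : nat) (z : Cpx) : Cpx := phit t (Cscale (/ 3 ^ k) z).

(* Phi_{k0}(z) = prod_{k in {0..m} \ {k0}} phi~_k(z) *)
Definition Phi_except (t : R) (m k0 : nat) (z : Cpx) : Cpx :=
  fold_right Cmul C1
    (map (fun k => phik t k z) (filter (fun k => negb (Nat.eqb k k0)) (seq 0 (S m)))).

Definition critical (t : R) (m : nat) (x0 delta : R) (k0 : nat) : Prop :=
  exists z0 : Cpx,
    x0 - delta <= Re z0 <= x0 + delta /\ - delta <= Im z0 <= delta /\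
    Cnorm (phik t k0 z0) < / 3 ^ m.

(* Write phi~_k(z) = 1 + u_k + v_k with u_k = e^{-i 3^{-k} z} and v_k = e^{-i t 3^{-k} z}.
   Then u_{k-1} = u_k^3 and v_{k-1} = v_k^3: going down one level cubes both exponentials,
   and for |Im z| <= delta (delta = 10^-4) both lie very close to the unit circle.  Two
   estimates on the trinomial 1 + u + v drive the proof:
   - one step: from 1 + u^3 + v^3 = 3uv(1 - s) + s(s^2 - 3s + 3), s = 1 + u + v, a value
     |phi~_n| <= 1/3 forces |phi~_{n-1}| >= 1/2 (and 9 |phi~_n| |phi~_{n-1}| >= 1 once
     |phi~_n| >= 1/20);
   - descent: if |phi~_n| = eps is small, the arguments of u_n, v_n are close to +-2pi/3, so
     |u_{n-j} - 1|, |v_{n-j} - 1| <~ 1.44 * 3^j * eps and |phi~_{n-j}| stays near 3.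
   Part (i): let k0 be the first level with |phi~_{k0}| < 1/3.  Every later small level n
   starts a "block" of levels below it whose factors 3|phi~_k| multiply to at least 1, and
   the block stops above k0; peeling off blocks gives prod_{k <> k0} 3|phi~_k| >= 1.
   Part (ii): if k1 < k2 were both critical for the same rectangle, descending from k2
   would give |phi~_{k1}| > 0.117 at one point of the rectangle; as |phi~_{k1}| varies by at
   most 14 delta there, this contradicts |phi~_{k1}| < 3^-m <= 1/9.
   The file follows this order: complex and trigonometric estimates, the trinomial with its
   descent and one-step lemmas, products of reals, the level estimates for phi~_k, then
   parts (i) and (ii). *)

From Pilot Require Import Defs.
From Stdlib Require Import Reals List Arith Lra Lia Psatz.
From Coquelicot Require Import Complex.
(* Re-imported so that the names Re, Im of Defs take precedence over Coquelicot's. *)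
Import Defs.
Open Scope R_scope.

Lemma Cnorm_Cmod (z : Cpx) : Cnorm z = Cmod z.
Proof. unfold Cnorm, Cmod; f_equal; simpl; ring. Qed.

Lemma Cmod_sub_le (a b : C) : Cmod (a - b) <= Cmod a + Cmod b.
Proof. rewrite <- (Cmod_opp b). apply Cmod_triangle. Qed.

Lemma Cmod_sub_ge (a b : C) : Cmod a - Cmod b <= Cmod (a - b).
Proof.
  pose proof (Cmod_triangle (a - b) b) as H.
  replace (a - b + b)%C with a in H by ring. lra.
Qed.

Lemma Cmod_add_ge (a b : C) : Cmod a - Cmod b <= Cmod (a + b).
Proof.
  pose proof (Cmod_sub_ge a (- b)) as H. rewrite Cmod_opp in H.
  replace (a - - b)%C with (a + b)%C in H by ring. exact H.
Qed.

Lemma Cmod_le_sq (z : C) (e : R) :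
  Cmod z <= e -> fst z * fst z + snd z * snd z <= e * e.
Proof.
  intros H. pose proof (Cmod_ge_0 z).
  assert (Cmod z * Cmod z = fst z * fst z + snd z * snd z).
  { unfold Cmod. rewrite sqrt_sqrt by nra. ring. }
  nra.
Qed.

Lemma sqrt_le_of (x y : R) : 0 <= y -> x <= y * y -> sqrt x <= y.
Proof.
  intros Hy Hx. rewrite <- (sqrt_Rsqr y Hy). apply sqrt_le_1_alt. exact Hx.
Qed.

Definition cis (th : R) : C := (cos th, sin th).
Definition polar (a th : R) : C := (RtoC (exp a) * cis th)%C.

Lemma cos_sin_sq (th : R) : cos th * cos th + sin th * sin th = 1.
Proof. pose proof (sin2_cos2 th). unfold Rsqr in H. lra. Qed.

Lemma Cmod_cis (th : R) : Cmod (cis th) = 1.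
Proof.
  unfold Cmod, cis; simpl. rewrite !Rmult_1_r, cos_sin_sq. apply sqrt_1.
Qed.

Lemma Cmod_polar (a th : R) : Cmod (polar a th) = exp a.
Proof.
  unfold polar. rewrite Cmod_mult, Cmod_R, Cmod_cis, Rabs_right by (left; apply exp_pos).
  ring.
Qed.

Lemma polar_mult (a th b ph : R) :
  (polar a th * polar b ph)%C = polar (a + b) (th + ph).
Proof.
  unfold polar, cis, RtoC, Cmult. rewrite exp_plus, cos_plus, sin_plus.
  cbn [fst snd]. f_equal; ring.
Qed.

Lemma polar_cube (a th : R) : polar (3 * a) (3 * th) = (polar a th * polar a th * polar a th)%C.
Proof. rewrite !polar_mult. f_equal; ring. Qed.

(* chord2 th = |e^{i th} - 1|^2, the squared chord from 1 to e^{i th}. *)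
Definition chord2 (th : R) : R := 2 - 2 * cos th.

Lemma Cmod_cis_sub1 (th : R) : Cmod (cis th - 1) = sqrt (chord2 th).
Proof.
  unfold Cmod, cis, chord2; simpl. f_equal. pose proof (cos_sin_sq th). nra.
Qed.

(* Triple-angle formula: the chord of 3 th vanishes to second order where 1 + 2 cos th = 0,
   i.e. at the cube roots of unity. *)
Lemma chord2_triple (th : R) :
  chord2 (3 * th) = (1 + 2 * cos th) ^ 2 * (2 - 2 * cos th).
Proof.
  unfold chord2. replace (3 * th) with (th + th + th) by ring.
  rewrite cos_plus, cos_plus, sin_plus.
  assert (Hs : sin th * sin th = 1 - cos th * cos th) by (pose proof (cos_sin_sq th); lra).
  transitivity (2 - 2 * (cos th * cos th * cos th - 3 * (sin th * sin th) * cos th)); [ring|].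
  rewrite Hs. ring.
Qed.

Lemma chord2_pow3 (j : nat) (th : R) : chord2 (3 ^ j * th) <= 9 ^ j * chord2 th.
Proof.
  induction j as [|j IH]; [simpl; rewrite !Rmult_1_l; lra|].
  replace (3 ^ S j * th) with (3 * (3 ^ j * th)) by (simpl; ring).
  rewrite chord2_triple.
  pose proof (COS_bound (3 ^ j * th)) as Hc.
  assert ((1 + 2 * cos (3 ^ j * th)) ^ 2 * (2 - 2 * cos (3 ^ j * th))
          <= 9 * chord2 (3 ^ j * th)).
  { unfold chord2. apply Rmult_le_compat_r; [lra|]. simpl. nra. }
  simpl pow. pose proof (pow_lt 9 j ltac:(lra)). nra.
Qed.

Lemma abs_sin_le (x : R) : Rabs (sin x) <= Rabs x.
Proof.
  assert (Hpos : forall y, 0 <= y -> Rabs (sin y) <= y).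
  { intros y Hy. pose proof (SIN_bound y). pose proof PI2_1.
    destruct (Rle_lt_dec 1 y) as [H1|H1]; [apply Rabs_le; lra|].
    destruct (Req_dec y 0) as [->|Hy0]; [rewrite sin_0, Rabs_R0; lra|].
    pose proof (sin_lt_x y ltac:(lra)). pose proof (sin_ge_0 y ltac:(lra) ltac:(lra)).
    rewrite Rabs_right; lra. }
  destruct (Rle_lt_dec 0 x) as [Hx|Hx].
  - rewrite (Rabs_right x) by lra. apply Hpos, Hx.
  - rewrite <- (Ropp_involutive x), sin_neg, !Rabs_Ropp, (Rabs_left x) by lra. apply Hpos. lra.
Qed.

Lemma Cmod_cis_sub (th ph : R) : Cmod (cis th - cis ph) <= Rabs (th - ph).
Proof.
  apply sqrt_le_of; [apply Rabs_pos|].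
  set (x := th - ph).
  assert (Hx : cos x = 1 - 2 * sin (x / 2) * sin (x / 2)).
  { replace x with (2 * (x / 2)) at 1 by field. apply cos_2a_sin. }
  assert (Hc : cos x = cos th * cos ph + sin th * sin ph) by apply cos_minus.
  pose proof (abs_sin_le (x / 2)) as Hs.
  apply Rsqr_le_abs_1 in Hs. unfold Rsqr in Hs.
  replace (Rabs x * Rabs x) with (x * x) by (rewrite <- Rabs_mult, Rabs_right; [reflexivity | nra]).
  pose proof (cos_sin_sq th). pose proof (cos_sin_sq ph).
  simpl. nra.
Qed.

(* If 1 + e^{i th1} + e^{i th2} is small, then th1 is close to a primitive cube root of
   unity: w = 1 + 2 cos th1 satisfies (1 - e)|w| <= 2e + e^2.  Indeed, with
   s = 1 + e^{i th1} + e^{i th2}, expanding |s - (1 + e^{i th1})|^2 = 1 gives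
   w = 2 Re(s conj(1 + e^{i th1})) - |s|^2 and |1 + e^{i th1}|^2 = 1 + w. *)
Lemma near_zero (th1 th2 e : R) :
  Cmod (1 + (cis th1 + cis th2)) <= e -> e < 1 ->
  (1 - e) * Rabs (1 + 2 * cos th1) <= 2 * e + e * e.
Proof.
  intros Hs He.
  pose proof (Cmod_le_sq _ _ Hs) as Hsq. simpl in Hsq.
  pose proof (Rle_trans _ _ _ (Cmod_ge_0 _) Hs) as He0.
  set (s1 := 1 + (cos th1 + cos th2)) in *.
  set (s2 := 0 + (sin th1 + sin th2)) in *.
  set (w := 1 + 2 * cos th1).
  set (p := s1 * (1 + cos th1) + s2 * sin th1).
  pose proof (cos_sin_sq th1) as U1. pose proof (cos_sin_sq th2) as U2.
  pose proof (COS_bound th1) as Hc1.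
  assert (Hw : w = 2 * p - (s1 * s1 + s2 * s2)) by (unfold w, p, s1, s2; nra).
  assert (Hcs : p * p <= (e * (1 + w / 2)) * (e * (1 + w / 2))).
  { assert (p * p <= (s1 * s1 + s2 * s2) * (1 + w)).
    { unfold p, w. pose proof (Rle_0_sqr (s1 * sin th1 - s2 * (1 + cos th1))).
      unfold Rsqr in *. nra. }
    assert (0 <= 1 + w) by (unfold w; lra).
    assert ((s1 * s1 + s2 * s2) * (1 + w) <= e * e * (1 + w)) by nra.
    nra. }
  assert (Hp : Rabs p <= e * (1 + w / 2)).
  { apply Rsqr_le_abs_0 in Hcs. rewrite (Rabs_right (e * _)) in Hcs; [exact Hcs|].
    unfold w; apply Rle_ge, Rmult_le_pos; lra. }
  assert (Habs : Rabs w <= 2 * Rabs p + (s1 * s1 + s2 * s2)).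
  { rewrite Hw. unfold Rminus. eapply Rle_trans; [apply Rabs_triang|].
    rewrite Rabs_Ropp, Rabs_mult, (Rabs_right 2), (Rabs_right (s1 * s1 + s2 * s2)) by nra.
    lra. }
  pose proof (Rle_abs w). fold w. nra.
Qed.

Lemma exp_sub1 (a : R) : Rabs a <= 1 / 2 -> Rabs (exp a - 1) <= 2 * Rabs a.
Proof.
  intros Ha.
  pose proof (exp_ineq1_le a) as H1. pose proof (exp_ineq1_le (- a)) as H2.
  assert (Hm : exp a * exp (- a) = 1) by (rewrite <- exp_plus, Rplus_opp_r; apply exp_0).
  pose proof (exp_pos a).
  destruct (Rle_dec 0 a) as [Hp|Hn].
  - rewrite (Rabs_right a) in Ha |- * by lra. rewrite Rabs_right by lra.
    assert (exp a * (1 - a) <= 1) by (rewrite <- Hm; apply Rmult_le_compat_l; lra).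
    nra.
  - assert (exp a <= 1).
    { assert (exp a * 1 <= exp a * exp (- a)) by (apply Rmult_le_compat_l; lra). lra. }
    rewrite (Rabs_left a) in Ha |- * by lra. rewrite Rabs_left1 by lra. lra.
Qed.

Definition delta0 : R := 1 / 10000.

Lemma exp_near1 (a : R) : Rabs a <= delta0 -> Rabs (exp a - 1) <= 2 * delta0.
Proof.
  intros Ha. unfold delta0 in *.
  pose proof (exp_sub1 a ltac:(lra)). lra.
Qed.

Lemma polar_lipschitz (a b th ph : R) :
  Rabs a <= delta0 -> Rabs b <= delta0 -> Rabs (th - ph) <= 2 * delta0 ->
  Cmod (polar a th - polar b ph) <= 7 * delta0.
Proof.
  intros Ha Hb Hth.
  replace (polar a th - polar b ph)%C with
    (RtoC (exp a - exp b) * cis th + RtoC (exp b) * (cis th - cis ph))%C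
    by (unfold polar, RtoC; apply injective_projections; simpl; ring).
  eapply Rle_trans; [apply Cmod_triangle|].
  rewrite !Cmod_mult, !Cmod_R, Cmod_cis, (Rabs_right (exp b)) by (left; apply exp_pos).
  pose proof (exp_near1 a Ha). pose proof (exp_near1 b Hb).
  assert (Rabs (exp a - exp b) <= 4 * delta0).
  { replace (exp a - exp b) with ((exp a - 1) - (exp b - 1)) by ring.
    eapply Rle_trans; [apply Rabs_triang|]. rewrite Rabs_Ropp. lra. }
  pose proof (Cmod_cis_sub th ph). pose proof (Rle_abs (exp b - 1)).
  pose proof (Cmod_ge_0 (cis th - cis ph)).
  assert (exp b * Cmod (cis th - cis ph) <= (1 + 2 * delta0) * (2 * delta0))
    by (apply Rmult_le_compat; [left; apply exp_pos | lra | lra | lra]).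
  unfold delta0 in *. lra.
Qed.

(* The trinomial 1 + e^{a1 + i th1} + e^{a2 + i th2}; phi~_k is of this form. *)
Definition trinomial (a1 th1 a2 th2 : R) : C := (1 + (polar a1 th1 + polar a2 th2))%C.

Lemma trinomial_ge (a1 th1 a2 th2 : R) :
  3 - Cmod (polar a1 th1 - 1) - Cmod (polar a2 th2 - 1) <= Cmod (trinomial a1 th1 a2 th2).
Proof.
  unfold trinomial.
  replace (1 + (polar a1 th1 + polar a2 th2))%C
    with (RtoC 3 + ((polar a1 th1 - 1) + (polar a2 th2 - 1)))%C
    by (unfold RtoC; apply injective_projections; simpl; ring).
  pose proof (Cmod_add_ge (RtoC 3) ((polar a1 th1 - 1) + (polar a2 th2 - 1))).
  pose proof (Cmod_triangle (polar a1 th1 - 1) (polar a2 th2 - 1)).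
  rewrite Cmod_R, Rabs_right in * by lra. lra.
Qed.

Lemma unit_trinomial_le (a1 th1 a2 th2 : R) :
  Cmod (1 + (cis th1 + cis th2)) <=
  Cmod (trinomial a1 th1 a2 th2) + Rabs (exp a1 - 1) + Rabs (exp a2 - 1).
Proof.
  replace (1 + (cis th1 + cis th2))%C with
    (trinomial a1 th1 a2 th2 - RtoC (exp a1 - 1) * cis th1 - RtoC (exp a2 - 1) * cis th2)%C
    by (unfold trinomial, polar, RtoC; apply injective_projections; simpl; ring).
  eapply Rle_trans; [apply Cmod_sub_le|].
  eapply Rle_trans; [apply Rplus_le_compat_r, Cmod_sub_le|].
  rewrite !Cmod_mult, !Cmod_R, !Cmod_cis. lra.
Qed.

Lemma polar_sub1 (a th B : R) :
  Rabs a <= delta0 -> sqrt (chord2 th) <= B ->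
  Cmod (polar a th - 1) <= (1 + 2 * delta0) * B + 2 * delta0.
Proof.
  intros Ha HB.
  replace (polar a th - 1)%C with (RtoC (exp a) * (cis th - 1) + RtoC (exp a - 1))%C
    by (unfold polar, RtoC; apply injective_projections; simpl; ring).
  eapply Rle_trans; [apply Cmod_triangle|].
  rewrite Cmod_mult, !Cmod_R, Cmod_cis_sub1, (Rabs_right (exp a)) by (left; apply exp_pos).
  pose proof (exp_near1 a Ha). pose proof (Rle_abs (exp a - 1)).
  pose proof (sqrt_pos (chord2 th)). pose proof (exp_pos a).
  assert (exp a * sqrt (chord2 th) <= (1 + 2 * delta0) * B) by (apply Rmult_le_compat; lra).
  lra.
Qed.

(* If th is near a primitive cube root of unity in the sense of near_zero, then after
   j >= 1 triplings e^{i 3^j th} is within 1.44 * 3^j * e of 1: the first tripling turns the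
   distance |w| into a chord of order |w|, each further one at most triples it. *)
Lemma chord_after_descent (th e : R) (j : nat) :
  (1 <= j)%nat -> 0 <= e <= 1 / 9 + delta0 ->
  (1 - e) * Rabs (1 + 2 * cos th) <= 2 * e + e * e ->
  sqrt (chord2 (3 ^ j * th)) <= 1.44 * (3 ^ j * e).
Proof.
  intros Hj He Hw. destruct j as [|j]; [lia|]. unfold delta0 in He.
  set (w := 1 + 2 * cos th) in *.
  assert (Hwe : Rabs w <= 2.38 * e).
  { apply (Rmult_le_reg_l (1 - e)); [lra|]. nra. }
  pose proof (Rabs_pos w) as Hw0. pose proof (pow_lt 3 j ltac:(lra)) as H3.
  assert (Hchord : chord2 (3 * th) <= (4.32 * e) * (4.32 * e)).
  { rewrite chord2_triple. fold w.
    assert (Hw2 : w ^ 2 <= (2.38 * e) * (2.38 * e)).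
    { replace (w ^ 2) with (Rabs w * Rabs w) by (rewrite <- Rabs_mult, Rabs_right; [ring | nra]).
      apply Rmult_le_compat; lra. }
    assert (2 - 2 * cos th <= 3 + 2.38 * e)
      by (pose proof (Rle_abs (- w)); rewrite Rabs_Ropp in *; unfold w in *; lra).
    assert (0 <= w ^ 2) by nra.
    assert (w ^ 2 * (2 - 2 * cos th) <= (2.38 * e) * (2.38 * e) * (3 + 2.38 * e))
      by (pose proof (COS_bound th); apply Rmult_le_compat; lra).
    nra. }
  apply sqrt_le_of; [simpl; nra|].
  replace (3 ^ S j * th) with (3 ^ j * (3 * th)) by (simpl; ring).
  eapply Rle_trans; [apply chord2_pow3|].
  replace 9 with (3 * 3) by ring. rewrite Rpow_mult_distr. simpl pow.
  assert (3 ^ j * 3 ^ j * chord2 (3 * th) <= 3 ^ j * 3 ^ j * ((4.32 * e) * (4.32 * e)))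
    by (apply Rmult_le_compat_l; nra).
  nra.
Qed.

Lemma descent (a1 th1 a2 th2 e : R) (j : nat) :
  (1 <= j)%nat -> Rabs (3 ^ j * a1) <= delta0 -> Rabs (3 ^ j * a2) <= delta0 ->
  Cmod (trinomial a1 th1 a2 th2) + Rabs (exp a1 - 1) + Rabs (exp a2 - 1) <= e ->
  e <= 1 / 9 + delta0 ->
  3 - 2 * ((1 + 2 * delta0) * (1.44 * (3 ^ j * e)) + 2 * delta0)
    <= Cmod (trinomial (3 ^ j * a1) (3 ^ j * th1) (3 ^ j * a2) (3 ^ j * th2)).
Proof.
  intros Hj Ha1 Ha2 He He9.
  pose proof (unit_trinomial_le a1 th1 a2 th2) as Hunit.
  pose proof (Cmod_ge_0 (trinomial a1 th1 a2 th2)).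
  pose proof (Rabs_pos (exp a1 - 1)). pose proof (Rabs_pos (exp a2 - 1)).
  assert (He0 : 0 <= e <= 1 / 9 + delta0) by lra.
  assert (He1 : e < 1) by (unfold delta0 in *; lra).
  assert (Hz1 : (1 - e) * Rabs (1 + 2 * cos th1) <= 2 * e + e * e)
    by (apply (near_zero th1 th2); lra).
  assert (Hz2 : (1 - e) * Rabs (1 + 2 * cos th2) <= 2 * e + e * e).
  { apply (near_zero th2 th1); [|lra].
    replace (cis th2 + cis th1)%C with (cis th1 + cis th2)%C by ring. lra. }
  pose proof (polar_sub1 _ _ _ Ha1 (chord_after_descent th1 e j Hj He0 Hz1)).
  pose proof (polar_sub1 _ _ _ Ha2 (chord_after_descent th2 e j Hj He0 Hz2)).
  pose proof (trinomial_ge (3 ^ j * a1) (3 ^ j * th1) (3 ^ j * a2) (3 ^ j * th2)).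
  lra.
Qed.

Lemma trinomial_triple (a1 th1 a2 th2 : R) :
  let s := trinomial a1 th1 a2 th2 in
  trinomial (3 * a1) (3 * th1) (3 * a2) (3 * th2) =
  (3 * (polar a1 th1 * polar a2 th2) * (1 - s) + s * (s * s - 3 * s + 3))%C.
Proof. intros s. unfold s, trinomial. rewrite !polar_cube. ring. Qed.

(* One step: since |uv| is about 1, a trinomial of size s <= 1/3 is followed by one of size
   at least 3(1 - 2 delta)(1 - s) - s(s^2 + 3s + 3), which is >= 1/2, and >= 1/(9s) when
   s >= 1/20. *)
Lemma triple_step (a1 th1 a2 th2 : R) :
  Rabs a1 <= delta0 -> Rabs a2 <= delta0 ->
  Cmod (trinomial a1 th1 a2 th2) <= 1 / 3 ->
  1 / 2 <= Cmod (trinomial (3 * a1) (3 * th1) (3 * a2) (3 * th2)) /\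
  (1 / 20 <= Cmod (trinomial a1 th1 a2 th2) ->
   1 <= 9 * Cmod (trinomial a1 th1 a2 th2) * Cmod (trinomial (3 * a1) (3 * th1) (3 * a2) (3 * th2))).
Proof.
  intros Ha1 Ha2 Hs. rewrite trinomial_triple.
  set (S := trinomial a1 th1 a2 th2) in *. set (s := Cmod S) in *.
  assert (Hs0 : 0 <= s) by apply Cmod_ge_0.
  assert (Huv : 1 - 2 * delta0 <= Cmod (polar a1 th1 * polar a2 th2)).
  { rewrite Cmod_mult, !Cmod_polar, <- exp_plus.
    pose proof (exp_ineq1_le (a1 + a2)).
    pose proof (Rle_abs (- a1)); pose proof (Rle_abs (- a2)). rewrite Rabs_Ropp in *. lra. }
  assert (H1s : 1 - s <= Cmod (1 - S)).
  { pose proof (Cmod_sub_ge 1 S) as H. rewrite Cmod_1 in H. fold s in H. lra. }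
  assert (Hmain : 3 * (1 - 2 * delta0) * (1 - s)
                  <= Cmod (3 * (polar a1 th1 * polar a2 th2) * (1 - S))).
  { rewrite 2!Cmod_mult, Cmod_R, Rabs_right by lra. unfold delta0 in *.
    apply Rmult_le_compat; lra. }
  assert (Hrest : Cmod (S * (S * S - 3 * S + 3)) <= s * (s * s + 3 * s + 3)).
  { rewrite Cmod_mult. apply Rmult_le_compat_l; [lra|].
    eapply Rle_trans; [apply Cmod_triangle|].
    eapply Rle_trans; [apply Rplus_le_compat_r, Cmod_sub_le|].
    rewrite !Cmod_mult, !Cmod_R, !Rabs_right by lra. fold s. lra. }
  pose proof (Cmod_add_ge (3 * (polar a1 th1 * polar a2 th2) * (1 - S))
                          (S * (S * S - 3 * S + 3))) as Htot.
  unfold delta0 in *. split.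
  - nra.
  - intros Hs20.
    assert (0 <= (s - 1 / 20) * (1 / 3 - s)) by nra.
    nra.
Qed.

(* phi~_k(z) as a trinomial: with z = x + iy, e^{-i 3^-k z} = e^{3^-k y - i 3^-k x}. *)
Lemma phik_trinomial (t : R) (k : nat) (z : Cpx) :
  phik t k z = trinomial (/ 3 ^ k * Im z) (- (/ 3 ^ k * Re z))
                         (t * (/ 3 ^ k * Im z)) (- (t * (/ 3 ^ k * Re z))).
Proof.
  unfold phik, phit, trinomial, polar, cis, Defs.Cexp, Cmul_negI, Cscale, Cadd, C1, Re, Im.
  apply injective_projections; simpl; ring.
Qed.

Lemma pow3_ratio (j n : nat) : (j <= n)%nat -> 0 < 3 ^ j * / 3 ^ n <= 1.
Proof.
  intros H. pose proof (pow_lt 3 j ltac:(lra)). pose proof (pow_lt 3 n ltac:(lra)).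
  pose proof (Rle_pow 3 j n ltac:(lra) H).
  split; [apply Rmult_lt_0_compat; [lra | apply Rinv_0_lt_compat; lra]|].
  apply (Rmult_le_reg_r (3 ^ n)); [lra|]. rewrite Rmult_assoc, Rinv_l; lra.
Qed.

Lemma phik_descend (t : R) (n j : nat) (z : Cpx) : (j <= n)%nat ->
  phik t (n - j) z =
  trinomial (3 ^ j * (/ 3 ^ n * Im z)) (3 ^ j * - (/ 3 ^ n * Re z))
            (3 ^ j * (t * (/ 3 ^ n * Im z))) (3 ^ j * - (t * (/ 3 ^ n * Re z))).
Proof.
  intros H. rewrite phik_trinomial.
  assert (Hinv : / 3 ^ (n - j) = 3 ^ j * / 3 ^ n).
  { replace n with (n - j + j)%nat at 2 by lia. rewrite pow_add.
    pose proof (pow_lt 3 (n - j) ltac:(lra)). pose proof (pow_lt 3 j ltac:(lra)).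
    field. lra. }
  rewrite Hinv. f_equal; ring.
Qed.

Lemma prod_f_R0_ext (f g : nat -> R) (n : nat) :
  (forall k, (k <= n)%nat -> f k = g k) -> prod_f_R0 f n = prod_f_R0 g n.
Proof.
  induction n as [|n IH]; intros H; simpl.
  - apply H; lia.
  - rewrite IH by (intros; apply H; lia). rewrite H by lia. reflexivity.
Qed.

Lemma prod_scale (c : R) (h : nat -> R) (m : nat) :
  prod_f_R0 (fun k => c * h k) m = c ^ S m * prod_f_R0 h m.
Proof. induction m as [|m IH]; simpl in *; [ring | rewrite IH; ring]. Qed.

Lemma prod_split_top (g : nat -> R) (n L : nat) : (L < n)%nat ->
  prod_f_R0 g n = prod_f_R0 g (n - S L) * prod_f_R0 (fun j => g (n - j)%nat) L.
Proof.
  revert n. induction L as [|L IH]; intros n H.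
  - destruct n as [|n]; [lia|]. simpl. rewrite Nat.sub_0_r. reflexivity.
  - rewrite (IH n) by lia.
    replace (n - S L)%nat with (S (n - S (S L))) by lia. simpl prod_f_R0 at 1.
    replace (S (n - S (S L))) with (n - S L)%nat by lia. simpl. ring.
Qed.

Lemma prod_lower_bound (f : nat -> R) (K : nat) :
  0 <= f 0%nat -> (forall j, (1 <= j <= K)%nat -> 3 <= f j) -> f 0%nat * 3 ^ K <= prod_f_R0 f K.
Proof.
  intros H0 H. induction K as [|K IH]; simpl; [lra|].
  pose proof (IH ltac:(intros; apply H; lia)). pose proof (H (S K) ltac:(lia)).
  pose proof (pow_lt 3 K ltac:(lra)).
  assert (0 <= f 0%nat * 3 ^ K) by nra.
  set (a := f 0%nat * 3 ^ K) in *. replace (f 0%nat * (3 * 3 ^ K)) with (3 * a) by (unfold a; ring).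
  nra.
Qed.

Lemma pow3_threshold (q X : R) (n : nat) : 0 <= q -> 9 * q <= X -> X < 3 ^ n * q ->
  exists L, (2 <= L < n)%nat /\ 3 ^ L * q <= X < 3 ^ S L * q.
Proof.
  intros Hq H9. induction n as [|n IH]; intros Hn; [simpl in Hn; lra|].
  destruct (Rle_dec (3 ^ n * q) X) as [Hle|Hgt].
  - exists n. split; [|split; assumption].
    destruct n as [|[|n]]; [simpl in *; lra | simpl in *; lra | lia].
  - destruct (IH ltac:(lra)) as [L HL]. exists L. intuition lia.
Qed.

Definition block_at (M : nat -> R) (n : nat) : Prop :=
  exists L, (1 <= L)%nat /\
    (forall j, (1 <= j <= L)%nat -> (j <= n)%nat -> 1 / 3 <= M (n - j)%nat) /\
    ((L <= n)%nat -> 1 <= prod_f_R0 (fun j => 3 * M (n - j)%nat) L).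

(* M with its k0-th value replaced by 1/3, so that 3 * skip M k0 k0 = 1 is a neutral factor. *)
Definition skip (M : nat -> R) (k0 k : nat) : R := if Nat.eqb k k0 then / 3 else M k.

Section SkipProduct.

Variable M : nat -> R.
Hypothesis M_block : forall n, (1 <= n)%nat -> M n < 1 / 3 -> block_at M n.

(* Combinatorial core of part (i): if k0 is the first small level, the product of the
   factors 3 M k, k <> k0, is at least 1.  Each factor below 1 comes from a small level
   above k0, and the block it starts ends above k0 because M k0 is small. *)
Lemma prod_skip_ge1 (m k0 : nat) :
  (forall k, (k < k0)%nat -> 1 / 3 <= M k) ->
  (M k0 < 1 / 3 \/ forall k, (k <= m)%nat -> 1 / 3 <= M k) ->
  forall n, (n <= m)%nat -> 1 <= prod_f_R0 (fun k => 3 * skip M k0 k) n.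
Proof.
  intros Hbelow Hk0 n.
  induction n as [n IH] using (well_founded_induction lt_wf). intros Hnm.
  destruct (Rle_dec 1 (3 * skip M k0 n)) as [Htop|Htop].
  - destruct n as [|n]; [exact Htop|].
    cbn [prod_f_R0]. pose proof (IH n ltac:(lia) ltac:(lia)). nra.
  - assert (Hne : n <> k0)
      by (intros ->; unfold skip in Htop; rewrite Nat.eqb_refl in Htop; lra).
    assert (Hn : M n < 1 / 3)
      by (unfold skip in Htop; destruct (Nat.eqb_spec n k0); [contradiction | lra]).
    assert (Hk0n : (k0 < n)%nat).
    { destruct (Nat.lt_ge_cases k0 n) as [H|H]; [exact H|].
      pose proof (Hbelow n ltac:(lia)). lra. }
    assert (Hsmall : M k0 < 1 / 3)
      by (destruct Hk0 as [H|H]; [exact H | pose proof (H n Hnm); lra]).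
    destruct (M_block n ltac:(lia) Hn) as [L [HL1 [HLlevels HLprod]]].
    assert (HLk0 : (L < n - k0)%nat).
    { destruct (Nat.lt_ge_cases L (n - k0)) as [H|H]; [exact H|].
      specialize (HLlevels (n - k0)%nat ltac:(lia) ltac:(lia)).
      replace (n - (n - k0))%nat with k0 in HLlevels by lia. lra. }
    rewrite (prod_split_top _ n L) by lia.
    rewrite (prod_f_R0_ext (fun j => 3 * skip M k0 (n - j)) (fun j => 3 * M (n - j)))
      by (intros j Hj; unfold skip; destruct (Nat.eqb_spec (n - j) k0); [lia | reflexivity]).
    pose proof (IH (n - S L)%nat ltac:(lia) ltac:(lia)). pose proof (HLprod ltac:(lia)). nra.
Qed.

End SkipProduct.

Lemma first_small_index (M : nat -> R) (m : nat) :
  exists k0, (k0 <= m)%nat /\ (forall k, (k < k0)%nat -> 1 / 3 <= M k) /\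
    (M k0 < 1 / 3 \/ forall k, (k <= m)%nat -> 1 / 3 <= M k).
Proof.
  induction m as [|m [k0 [Hk0 [Hbelow Hk]]]].
  - exists 0%nat. split; [lia|split; [intros; lia|]].
    destruct (Rlt_dec (M 0%nat) (1 / 3)); [left; assumption|].
    right. intros k Hk. replace k with 0%nat by lia. lra.
  - destruct Hk as [Hk|Hall]; [exists k0; split; [lia|]; tauto|].
    destruct (Rlt_dec (M (S m)) (1 / 3)) as [Hs|Hs].
    + exists (S m). split; [lia|split; [intros k Hk; apply Hall; lia | left; assumption]].
    + exists k0. split; [lia|split; [assumption|right]].
      intros k Hk. destruct (Nat.eq_dec k (S m)) as [->|Hne]; [lra | apply Hall; lia].
Qed.

Lemma fold_mult_app (l1 l2 : list R) :
  fold_right Rmult 1 (l1 ++ l2) = fold_right Rmult 1 l1 * fold_right Rmult 1 l2.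
Proof. induction l1 as [|x l1 IH]; simpl; [ring | rewrite IH; ring]. Qed.

Lemma prod_replace (f : nat -> R) (c : R) (k0 m : nat) :
  prod_f_R0 (fun k => if Nat.eqb k k0 then c else f k) m =
  (if Nat.leb k0 m then c else 1) *
  fold_right Rmult 1 (map f (filter (fun k => negb (Nat.eqb k k0)) (seq 0 (S m)))).
Proof.
  induction m as [|m IH].
  - destruct k0; simpl; ring.
  - rewrite seq_S, filter_app, map_app, fold_mult_app. cbn [prod_f_R0]. rewrite IH.
    cbn [filter map fold_right Nat.add].
    destruct (Nat.eqb_spec (S m) k0), (Nat.leb_spec k0 m), (Nat.leb_spec k0 (S m));
      cbn [negb map fold_right]; try lia; ring.
Qed.

Lemma Cmod_fold_mult {T : Type} (h : T -> C) (l : list T) :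
  Cmod (fold_right Cmult 1%C (map h l)) = fold_right Rmult 1 (map (fun k => Cmod (h k)) l).
Proof.
  induction l as [|x l IH]; simpl; [apply Cmod_1 | rewrite Cmod_mult, IH; reflexivity].
Qed.

Section Levels.

Variables (t : R) (z : Cpx).
Hypothesis Ht : 0 <= t <= 1.
Hypothesis Hz : Rabs (Im z) <= delta0.

Definition N (k : nat) : R := Cmod (phik t k z).

Lemma N_nonneg (k : nat) : 0 <= N k.
Proof. apply Cmod_ge_0. Qed.

Lemma level_amplitudes (n j : nat) :
  Rabs (3 ^ j * (/ 3 ^ n * Im z)) <= 3 ^ j * / 3 ^ n * delta0 /\
  Rabs (3 ^ j * (t * (/ 3 ^ n * Im z))) <= 3 ^ j * / 3 ^ n * delta0.
Proof.
  pose proof (pow_lt 3 j ltac:(lra)). pose proof (pow_lt 3 n ltac:(lra)).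
  assert (Hr : 0 < 3 ^ j * / 3 ^ n)
    by (apply Rmult_lt_0_compat; [lra | apply Rinv_0_lt_compat; lra]).
  replace (3 ^ j * (/ 3 ^ n * Im z)) with ((3 ^ j * / 3 ^ n) * Im z) by ring.
  replace (3 ^ j * (t * (/ 3 ^ n * Im z))) with (t * ((3 ^ j * / 3 ^ n) * Im z)) by ring.
  pose proof (Rabs_pos (Im z)).
  assert (Hy : Rabs (3 ^ j * / 3 ^ n * Im z) <= 3 ^ j * / 3 ^ n * delta0).
  { rewrite Rabs_mult, (Rabs_right (3 ^ j * / 3 ^ n)) by lra. apply Rmult_le_compat_l; lra. }
  split; [exact Hy|].
  rewrite Rabs_mult, (Rabs_right t) by lra. pose proof (Rabs_pos (3 ^ j * / 3 ^ n * Im z)). nra.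
Qed.

Lemma level_amplitudes_small (n j : nat) : (j <= n)%nat ->
  Rabs (3 ^ j * (/ 3 ^ n * Im z)) <= delta0 /\
  Rabs (3 ^ j * (t * (/ 3 ^ n * Im z))) <= delta0.
Proof.
  intros H. pose proof (pow3_ratio j n H). destruct (level_amplitudes n j).
  unfold delta0 in *. split; nra.
Qed.

Lemma level_excess (n : nat) :
  Cmod (trinomial (/ 3 ^ n * Im z) (- (/ 3 ^ n * Re z))
                  (t * (/ 3 ^ n * Im z)) (- (t * (/ 3 ^ n * Re z))))
  + Rabs (exp (/ 3 ^ n * Im z) - 1) + Rabs (exp (t * (/ 3 ^ n * Im z)) - 1)
  <= N n + 4 * delta0 / 3 ^ n.
Proof.
  destruct (level_amplitudes n 0) as [H1 H2]. rewrite pow_O, !Rmult_1_l in *.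
  pose proof (pow3_ratio 0 n ltac:(lia)). rewrite pow_O, Rmult_1_l in *.
  pose proof (exp_sub1 (/ 3 ^ n * Im z) ltac:(unfold delta0 in *; nra)).
  pose proof (exp_sub1 (t * (/ 3 ^ n * Im z)) ltac:(unfold delta0 in *; nra)).
  unfold N. rewrite phik_trinomial. unfold Rdiv. lra.
Qed.

Lemma level_bound (n j : nat) : (1 <= j <= n)%nat ->
  N n + 4 * delta0 / 3 ^ n <= 1 / 9 + delta0 ->
  3 - 2 * ((1 + 2 * delta0) * (1.44 * (3 ^ j * (N n + 4 * delta0 / 3 ^ n))) + 2 * delta0)
    <= N (n - j).
Proof.
  intros Hj He. destruct (level_amplitudes_small n j ltac:(lia)) as [H1 H2].
  unfold N at 2. rewrite phik_descend by lia.
  apply descent; [lia | exact H1 | exact H2 | apply level_excess | exact He].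
Qed.

Lemma level_one (n : nat) : (1 <= n)%nat -> N n <= 1 / 3 ->
  1 / 2 <= N (n - 1) /\ (1 / 20 <= N n -> 1 <= 9 * N n * N (n - 1)).
Proof.
  intros Hn Hs. destruct (level_amplitudes_small n 0 ltac:(lia)) as [H1 H2].
  rewrite pow_O, !Rmult_1_l in H1, H2.
  unfold N in *. rewrite phik_descend by lia. rewrite phik_trinomial in *.
  rewrite pow_1. apply triple_step; assumption.
Qed.

Lemma small_level (n j : nat) (X : R) : (1 <= j <= n)%nat -> N n <= 1 / 20 ->
  3 ^ j * N n <= X ->
  3 - 2 * ((1 + 2 * delta0) * (1.44 * (X + 4 * delta0)) + 2 * delta0) <= N (n - j).
Proof.
  intros Hj Hs HX.
  pose proof (pow3_ratio j n ltac:(lia)) as Hr. pose proof (pow3_ratio 0 n ltac:(lia)) as Hr0.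
  rewrite pow_O, Rmult_1_l in Hr0. pose proof (N_nonneg n).
  assert (He : N n + 4 * delta0 / 3 ^ n <= 1 / 9 + delta0) by (unfold Rdiv, delta0 in *; nra).
  pose proof (level_bound n j Hj He).
  assert (3 ^ j * (N n + 4 * delta0 / 3 ^ n) <= X + 4 * delta0)
    by (unfold Rdiv, delta0 in *; nra).
  unfold delta0 in *. nra.
Qed.

(* A very small level starts a block: take L maximal with 3^L N n <= 0.6; all levels down to
   n - L are >= 1.25, level n - L + 1 is >= 2.4, and 3^(L+1) N n > 0.6 makes the product
   of the block at least 1. *)
Lemma block_small (n : nat) : (1 <= n)%nat -> N n <= 1 / 20 -> block_at N n.
Proof.
  intros Hn Hs. pose proof (N_nonneg n) as H0.
  assert (Hlev : forall j, (1 <= j <= n)%nat -> 3 ^ j * N n <= 0.6 -> 1.25 <= N (n - j)).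
  { intros j Hj HX. pose proof (small_level n j 0.6 Hj Hs HX). unfold delta0 in *. lra. }
  destruct (Rle_dec (3 ^ n * N n) 0.6) as [Hall|Hsome].
  - exists (S n). split; [lia|split; [|lia]].
    intros j Hj Hjn. pose proof (Rle_pow 3 j n ltac:(lra) Hjn).
    enough (1.25 <= N (n - j)) by lra. apply Hlev; [lia | nra].
  - destruct (pow3_threshold (N n) 0.6 n H0 ltac:(lra) ltac:(lra)) as [L [HL [HLlo HLhi]]].
    assert (Hlow : forall j, (1 <= j <= L)%nat -> 1.25 <= N (n - j)).
    { intros j Hj. pose proof (Rle_pow 3 j L ltac:(lra) ltac:(lia)). apply Hlev; [lia | nra]. }
    exists L. split; [lia|split].
    + intros j Hj _. pose proof (Hlow j Hj). lra.
    + intros _. destruct L as [|[|K]]; [lia|lia|].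
      assert (Hpen : 2.4 <= N (n - S K)).
      { pose proof (small_level n (S K) 0.2 ltac:(lia) Hs).
        assert (3 ^ S K * N n <= 0.2) by (simpl in HLlo |- *; lra).
        unfold delta0 in *. lra. }
      pose proof (Hlow (S (S K)) ltac:(lia)) as Hlast.
      assert (Hpre : 3 * N n * 3 ^ K <= prod_f_R0 (fun j => 3 * N (n - j)) K).
      { pose proof (prod_lower_bound (fun j => 3 * N (n - j)) K) as H.
        cbn beta in H. rewrite Nat.sub_0_r in H. apply H; [lra|].
        intros j Hj. pose proof (Hlow j ltac:(lia)). lra. }
      assert (Hbig : 0.6 / 27 < 3 ^ K * N n) by (simpl in HLhi; lra).
      simpl prod_f_R0. pose proof (pow_lt 3 K ltac:(lra)).
      set (P := prod_f_R0 (fun j => 3 * N (n - j)) K) in *.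
      assert (HP : 0.6 / 9 <= P) by nra.
      assert (Hab : 27 <= 3 * N (n - S K) * (3 * N (n - S (S K)))) by nra.
      replace (P * (3 * N (n - S K)) * (3 * N (n - S (S K))))
        with (P * (3 * N (n - S K) * (3 * N (n - S (S K))))) by ring.
      nra.
Qed.

(* Every small level n >= 1 starts a block: a moderately small one (N n >= 1/20) starts the
   block of length 1 given by the one-step bound. *)
Lemma block (n : nat) : (1 <= n)%nat -> N n < 1 / 3 -> block_at N n.
Proof.
  intros Hn Hs. destruct (Rle_dec (N n) (1 / 20)) as [Hsmall|Hmod].
  - apply block_small; assumption.
  - destruct (level_one n Hn ltac:(lra)) as [Hhalf Hprod].
    exists 1%nat. split; [lia|split].
    + intros j Hj _. replace j with 1%nat by lia. lra.
    + intros _. simpl. rewrite Nat.sub_0_r. specialize (Hprod ltac:(lra)). lra.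
Qed.

End Levels.

Lemma Phi_except_norm (t : R) (m k0 : nat) (z : Cpx) :
  Cnorm (Phi_except t m k0 z) =
  fold_right Rmult 1 (map (N t z) (filter (fun k => negb (Nat.eqb k k0)) (seq 0 (S m)))).
Proof. rewrite Cnorm_Cmod. apply Cmod_fold_mult. Qed.

(* Part (i): drop the first small level k0. *)
Lemma part_i (t : R) (m : nat) (z : Cpx) : 0 <= t <= 1 -> Rabs (Im z) <= delta0 ->
  exists k0, (k0 <= m)%nat /\ Cnorm (Phi_except t m k0 z) >= / 3 ^ m.
Proof.
  intros Ht Hz.
  destruct (first_small_index (N t z) m) as [k0 [Hk0 [Hbelow Hk]]].
  exists k0. split; [exact Hk0|].
  pose proof (prod_skip_ge1 (N t z) (block t z Ht Hz) m k0 Hbelow Hk m (le_n m)) as Hge.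
  unfold skip in Hge. rewrite prod_scale, prod_replace, <- Phi_except_norm in Hge.
  destruct (Nat.leb_spec k0 m); [|lia].
  pose proof (pow_lt 3 m ltac:(lra)).
  apply Rle_ge, (Rmult_le_reg_l (3 ^ m)); [lra|]. rewrite Rinv_r by lra.
  simpl pow in Hge. replace (3 * 3 ^ m * (/ 3 * Cnorm (Phi_except t m k0 z)))
    with (3 ^ m * Cnorm (Phi_except t m k0 z)) in Hge by field. lra.
Qed.

Lemma scaled_le (c x b : R) : 0 <= c <= 1 -> Rabs x <= b -> Rabs (c * x) <= b.
Proof.
  intros Hc Hx. rewrite Rabs_mult, (Rabs_right c) by lra.
  pose proof (Rabs_pos x). nra.
Qed.

Lemma N_lipschitz (t : R) (k : nat) (z1 z2 : Cpx) : 0 <= t <= 1 ->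
  Rabs (Im z1) <= delta0 -> Rabs (Im z2) <= delta0 -> Rabs (Re z1 - Re z2) <= 2 * delta0 ->
  N t z2 k - 14 * delta0 <= N t z1 k.
Proof.
  intros Ht H1 H2 Hx. unfold N. rewrite !phik_trinomial. unfold trinomial.
  pose proof (pow3_ratio 0 k ltac:(lia)) as Hr. rewrite pow_O, Rmult_1_l in Hr.
  assert (Hr' : 0 <= / 3 ^ k <= 1) by lra.
  assert (Hang : forall c, 0 <= c <= 1 ->
    Rabs (- (c * (/ 3 ^ k * Re z1)) - - (c * (/ 3 ^ k * Re z2))) <= 2 * delta0).
  { intros c Hc. replace (- (c * (/ 3 ^ k * Re z1)) - - (c * (/ 3 ^ k * Re z2)))
      with (- (c * (/ 3 ^ k * (Re z1 - Re z2)))) by ring.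
    rewrite Rabs_Ropp. apply scaled_le; [exact Hc|]. apply scaled_le; assumption. }
  pose proof (polar_lipschitz (/ 3 ^ k * Im z1) (/ 3 ^ k * Im z2) _ _
    (scaled_le _ _ _ Hr' H1) (scaled_le _ _ _ Hr' H2) (Hang 1 ltac:(lra))) as L1.
  pose proof (polar_lipschitz (t * (/ 3 ^ k * Im z1)) (t * (/ 3 ^ k * Im z2)) _ _
    (scaled_le _ _ _ Ht (scaled_le _ _ _ Hr' H1)) (scaled_le _ _ _ Ht (scaled_le _ _ _ Hr' H2))
    (Hang t Ht)) as L2.
  rewrite !Rmult_1_l in L1.
  set (u1 := polar (/ 3 ^ k * Im z1) (- (/ 3 ^ k * Re z1))) in *.
  set (u2 := polar (/ 3 ^ k * Im z2) (- (/ 3 ^ k * Re z2))) in *.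
  set (v1 := polar (t * (/ 3 ^ k * Im z1)) (- (t * (/ 3 ^ k * Re z1)))) in *.
  set (v2 := polar (t * (/ 3 ^ k * Im z2)) (- (t * (/ 3 ^ k * Re z2)))) in *.
  replace (1 + (u1 + v1))%C with ((1 + (u2 + v2)) + ((u1 - u2) + (v1 - v2)))%C by ring.
  pose proof (Cmod_add_ge (1 + (u2 + v2)) ((u1 - u2) + (v1 - v2))).
  pose proof (Cmod_triangle (u1 - u2) (v1 - v2)). lra.
Qed.

Lemma critical_point (t : R) (m : nat) (x0 : R) (k : nat) :
  critical t m x0 delta0 k ->
  exists z, Rabs (Re z - x0) <= delta0 /\ Rabs (Im z) <= delta0 /\ N t z k < / 3 ^ m.
Proof.
  intros [z [Hre [Him Hc]]]. exists z.
  rewrite Cnorm_Cmod in Hc. split; [apply Rabs_le; lra | split; [apply Rabs_le; lra | exact Hc]].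
Qed.

(* Part (ii): from level k2, small at z2, the level k1 < k2 is at least 1/2 (if k1 = k2 - 1)
   or 0.117 (otherwise) at z2, hence larger than 3^-m at every point of the rectangle. *)
Lemma no_two_critical (t : R) (m : nat) (x0 : R) (k1 k2 : nat) :
  0 <= t <= 1 -> (k1 < k2 <= m)%nat ->
  critical t m x0 delta0 k1 -> critical t m x0 delta0 k2 -> False.
Proof.
  intros Ht Hk C1 C2.
  destruct (critical_point _ _ _ _ C1) as [z1 [Hx1 [Hy1 Hc1]]].
  destruct (critical_point _ _ _ _ C2) as [z2 [Hx2 [Hy2 Hc2]]].
  assert (Hx : Rabs (Re z1 - Re z2) <= 2 * delta0).
  { replace (Re z1 - Re z2) with ((Re z1 - x0) - (Re z2 - x0)) by ring.
    eapply Rle_trans; [apply Rabs_triang|]. rewrite Rabs_Ropp. lra. }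
  pose proof (N_lipschitz t k1 z1 z2 Ht Hy1 Hy2 Hx) as Hlip.
  pose proof (pow3_ratio 0 m ltac:(lia)) as Hm. rewrite pow_O, Rmult_1_l in Hm.
  pose proof (N_nonneg t z2 k2).
  destruct (Nat.eq_dec k1 (k2 - 1)) as [->|Hfar].
  - assert (Hm1 : / 3 ^ m <= / 3).
    { apply Rinv_le_contravar; [lra|]. rewrite <- pow_1 at 1. apply Rle_pow; [lra|lia]. }
    destruct (level_one t z2 Ht Hy2 k2 ltac:(lia) ltac:(lra)) as [Hhalf _].
    unfold delta0 in *. lra.
  - set (D := (k2 - k1)%nat).
    assert (Hm2 : / 3 ^ m <= / 9).
    { apply Rinv_le_contravar; [lra|]. replace 9 with (3 ^ 2) by ring. apply Rle_pow; [lra|lia]. }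
    assert (H9 : 4 * delta0 / 3 ^ k2 <= 4 * delta0 / 9).
    { unfold Rdiv. apply Rmult_le_compat_l; [unfold delta0; lra|].
      apply Rinv_le_contravar; [lra|]. replace 9 with (3 ^ 2) by ring. apply Rle_pow; [lra|lia]. }
    assert (He : N t z2 k2 + 4 * delta0 / 3 ^ k2 <= 1 / 9 + delta0) by (unfold delta0 in *; lra).
    pose proof (level_bound t z2 Ht Hy2 k2 D ltac:(unfold D; lia) He) as Hlev.
    replace (k2 - D)%nat with k1 in Hlev by (unfold D; lia).
    assert (HD : 3 ^ D * (N t z2 k2 + 4 * delta0 / 3 ^ k2) <= 1 + 4 * delta0).
    { pose proof (pow3_ratio D m ltac:(unfold D; lia)).
      pose proof (pow3_ratio D k2 ltac:(unfold D; lia)).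
      pose proof (pow_lt 3 D ltac:(lra)).
      assert (3 ^ D * N t z2 k2 <= 3 ^ D * / 3 ^ m) by (apply Rmult_le_compat_l; lra).
      unfold Rdiv, delta0 in *. nra. }
    unfold delta0 in *. lra.
Qed.

Theorem proposition21 :
  exists delta : R, 0 < delta /\
    forall (t : R), 0 <= t <= 1 -> forall (m : nat),
      (forall z : Cpx, Rabs (Im z) <= delta ->
         exists k0 : nat, (k0 <= m)%nat /\ Cnorm (Phi_except t m k0 z) >= / 3 ^ m) /\
      (forall (x0 : R) (k1 k2 : nat), (k1 <= m)%nat -> (k2 <= m)%nat ->
         critical t m x0 delta k1 -> critical t m x0 delta k2 -> k1 = k2).
Proof.
  exists delta0. split; [unfold delta0; lra|].
  intros t Ht m. split.
  - intros z Hz. apply part_i; assumption.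
  - intros x0 k1 k2 Hk1 Hk2 C1 C2.
    destruct (lt_eq_lt_dec k1 k2) as [[Hlt|Heq]|Hgt]; [exfalso | exact Heq | exfalso].
    + apply (no_two_critical t m x0 k1 k2); [assumption | lia | assumption | assumption].
    + apply (no_two_critical t m x0 k2 k1); [assumption | lia | assumption | assumption].
Qed.
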